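(* Let $n$ be even, and let $S^{[1]},S^{[2]}\subset\mathbb F_2^n$ be disjoint sets with $\#S^{[1]}+\#S^{[2]}<2^n$. Let $f^*_{[1]}:S^{[1]}\to\mathbb F_2$ and $f^*_{[2]}:S^{[2]}\to\mathbb F_2$ be arbitrary, and define $W:\mathbb F_2^n\to\mathbb Z$ by $W(u)=0$ for $u\notin S^{[1]}\cup S^{[2]}$, $W(u)=(-1)^{f^*_{[1]}(u)}2^{(n+2)/2}$ for $u\in S^{[1]}$, $W(u)=(-1)^{f^*_{[2]}(u)}2^{n/2}$ for $u\in S^{[2]}$. For $i=1,2$ put $X_i(u)=\sum_{\omega\in S^{[i]}}(-1)^{f^*_{[i]}(\omega)\oplus u\cdot\omega}$. Then there exists a Boolean function $f:\mathbb F_2^n\to\mathbb F_2$ with $W_f=W$ if and only if for every $u\in\mathbb F_2^n$ there is $\varepsilon_u\in\{0,1\}$ with $2X_1(u)+X_2(u)=(-1)^{\varepsilon_u}2^{n/2}$.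
   Context: For $f:\mathbb F_2^n\to\mathbb F_2$, $W_f(\omega)=\sum_{x\in\mathbb F_2^n}(-1)^{f(x)\oplus\omega\cdot x}$, where $\omega\cdot x$ is the usual dot product over $\mathbb F_2$. *)

From HB Require Import structures.
From mathcomp Require Import all_boot all_order all_algebra.
Set Implicit Arguments. Unset Strict Implicit. Unset Printing Implicit Defensive.
Import Order.TTheory GRing.Theory Num.Theory.
Local Open Scope ring_scope.

(* Elements of F_2^n, represented as finite functions 'I_n -> bool
   (bool = F_2, with addb = xor and andb = multiplication). *)
Definition bvec (n : nat) := {ffun 'I_n -> bool}.

Definition dotb (n : nat) (w x : bvec n) : bool :=
  \big[addb/false]_(i < n) (w i && x i).

Definition sgnb (b : bool) : int := (-1) ^+ b.

Definition walsh (n : nat) (f : bvec n -> bool) (w : bvec n) : int :=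
  \sum_(x : bvec n) sgnb (f x (+) dotb w x).

Definition Wpres (n : nat) (S1 S2 : {set bvec n}) (f1 f2 : bvec n -> bool)
  (u : bvec n) : int :=
  if u \in S1 then sgnb (f1 u) * (2 ^+ (n./2).+1)
  else if u \in S2 then sgnb (f2 u) * (2 ^+ n./2)
  else 0.

Definition Xsum (n : nat) (S : {set bvec n}) (fs : bvec n -> bool) (u : bvec n) : int :=
  \sum_(w in S) sgnb (fs w (+) dotb u w).

(* Walsh inversion: a function W : F_2^n -> Z is the Walsh spectrum of some
   Boolean f exactly when its Hadamard transform is +-2^n everywhere, the sign
   at x being (-1)^f(x).  For the prescribed W, which is 2^(n/2) times
   2*1_{S1}(-1)^{f1} + 1_{S2}(-1)^{f2}, the Hadamard transform is
   2^(n/2) (2 X_1 + X_2), and 2^n = 2^(n/2) * 2^(n/2) when n is even. *)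
From HB Require Import structures.
From mathcomp Require Import all_boot all_order all_algebra.
From mathcomp Require Import zify ring.
Import Order.TTheory GRing.Theory Num.Theory.
Local Open Scope ring_scope.

Lemma sgnbD (a b : bool) : sgnb (a (+) b) = sgnb a * sgnb b.
Proof. by case: a; case: b; rewrite /sgnb /= ?expr0 ?expr1 ?mulr1 ?mul1r ?mulrNN. Qed.

Lemma sgnbN (a : bool) : sgnb (~~ a) = - sgnb a.
Proof. by case: a; rewrite /sgnb /= ?expr0 ?expr1 ?opprK. Qed.

Lemma sgnbM_lt0 (e : bool) (c : int) : 0 < c -> (sgnb e * c < 0) = e.
Proof.
move=> c_gt0; case: e; rewrite /sgnb /= ?expr1 ?expr0 ?mulN1r ?mul1r.
  by rewrite oppr_lt0 c_gt0.
by rewrite ltNge (ltW c_gt0).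
Qed.

Section Hadamard.
Variable n : nat.
Implicit Types w x y u : bvec n.

Definition bxor x y : bvec n := [ffun i => x i (+) y i].
Definition bzero : bvec n := [ffun => false].
Definition bunit (i : 'I_n) : bvec n := [ffun j => j == i].

Lemma dotbC w x : dotb w x = dotb x w.
Proof. by apply: eq_bigr => i _; rewrite andbC. Qed.

Lemma dotbDr w x y : dotb w (bxor x y) = dotb w x (+) dotb w y.
Proof. by rewrite /dotb -big_split; apply: eq_bigr => i _; rewrite ffunE; case: (w i). Qed.

Lemma dotb_unit w i : dotb w (bunit i) = w i.
Proof.
rewrite /dotb (bigD1 i) //= big1 ?ffunE ?eqxx ?andbT ?addbF // => j /negbTE.
by rewrite ffunE => ->; rewrite andbF.
Qed.

Lemma dotb0 w : dotb w bzero = false.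
Proof. by rewrite /dotb big1 // => i _; rewrite ffunE andbF. Qed.

Lemma bxor_eq0 x y : (bxor x y == bzero) = (x == y).
Proof.
apply/eqP/eqP => [xy0|->]; last by apply/ffunP => i; rewrite !ffunE addbb.
apply/ffunP => i; have := congr1 (fun f : bvec n => f i) xy0.
by rewrite !ffunE; case: (x i); case: (y i).
Qed.

Lemma bxor_unit_inj i : injective (bxor^~ (bunit i)).
Proof.
move=> x y xy; apply/ffunP => j; have := congr1 (fun f : bvec n => f j) xy.
by rewrite !ffunE; case: (x j); case: (y j); case: (j == i).
Qed.

Lemma card_bvec : #|{: bvec n}| = (2 ^ n)%N.
Proof. by rewrite card_ffun card_bool card_ord. Qed.

(* For w <> 0, translating u by a unit vector e_i with w_i = 1 flips every sign. *)
Lemma sum_sgnb_dotb w :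
  \sum_u sgnb (dotb u w) = if w == bzero then 2 ^+ n else 0.
Proof.
case: eqP => [->|/eqP w_neq0].
  under eq_bigr do rewrite dotb0.
  by rewrite sumr_const card_bvec /sgnb expr0 natrX.
have [i wi] : exists i, w i.
  apply/existsP; apply: contraNT w_neq0 => /existsPn wF.
  by apply/eqP/ffunP => i; rewrite ffunE; apply/negbTE.
set S := \sum_u _; have S_opp : S = - S.
  rewrite {2}/S -sumrN (reindex_inj (@bxor_unit_inj i)); apply: eq_bigr => u _.
  by rewrite [dotb (bxor _ _) _]dotbC dotbDr dotb_unit wi addbT sgnbN opprK dotbC.
lia.
Qed.

Definition hadamard (g : bvec n -> int) u : int := \sum_x g x * sgnb (dotb u x).

Lemma eq_hadamard (g h : bvec n -> int) u :
  (forall x, g x = h x) -> hadamard g u = hadamard h u.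
Proof. by move=> gh; apply: eq_bigr => x _; rewrite gh. Qed.

Lemma hadamardD (g h : bvec n -> int) u :
  hadamard (fun x => g x + h x) u = hadamard g u + hadamard h u.
Proof. by rewrite /hadamard -big_split; apply: eq_bigr => x _; rewrite mulrDl. Qed.

Lemma hadamardZ (c : int) (g : bvec n -> int) u :
  hadamard (fun x => c * g x) u = c * hadamard g u.
Proof. by rewrite /hadamard mulr_sumr; apply: eq_bigr => x _; rewrite mulrA. Qed.

Lemma hadamardK (g : bvec n -> int) y : hadamard (hadamard g) y = 2 ^+ n * g y.
Proof.
rewrite /hadamard; under eq_bigr do rewrite big_distrl /=.
rewrite exchange_big /=; under eq_bigr => x _.
  under eq_bigr do rewrite -mulrA -sgnbD [dotb y _]dotbC -dotbDr.
  rewrite -big_distrr /= sum_sgnb_dotb bxor_eq0.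
  over.
rewrite (bigD1 y) //= eqxx big1 ?addr0 1?mulrC // => x /negbTE ->.
by rewrite mulr0.
Qed.

Lemma walshE (f : bvec n -> bool) u : walsh f u = hadamard (sgnb \o f) u.
Proof. by apply: eq_bigr => x _; rewrite sgnbD. Qed.

Lemma walsh_spectrumP (W : bvec n -> int) :
  (exists f : bvec n -> bool, forall u, walsh f u = W u) <->
  (forall y, exists eps : bool, hadamard W y = sgnb eps * 2 ^+ n).
Proof.
have n2_gt0 : (0 : int) < 2 ^+ n by rewrite exprn_gt0.
split=> [[f Wf] y|HW].
  have -> : hadamard W y = hadamard (hadamard (sgnb \o f)) y.
    by apply: eq_bigr => u _; rewrite -walshE Wf.
  by exists (f y); rewrite hadamardK mulrC.
have sgnW y : sgnb (hadamard W y < 0) * 2 ^+ n = hadamard W y.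
  by have [e ->] := HW y; rewrite sgnbM_lt0.
exists (fun y => hadamard W y < 0) => u.
apply: (mulfI (lt0r_neq0 n2_gt0)).
rewrite -[RHS]hadamardK walshE -hadamardZ; apply: eq_bigr => x _.
by congr (_ * _); rewrite /= mulrC; apply: sgnW.
Qed.

Definition sgn_on (S : {set bvec n}) (fs : bvec n -> bool) x : int :=
  if x \in S then sgnb (fs x) else 0.

Lemma hadamard_sgn_on (S : {set bvec n}) (fs : bvec n -> bool) u :
  hadamard (sgn_on S fs) u = Xsum S fs u.
Proof.
rewrite /Xsum big_mkcond; apply: eq_bigr => x _.
by rewrite /sgn_on sgnbD; case: ifP; rewrite ?mul0r.
Qed.

Lemma WpresE (S1 S2 : {set bvec n}) (f1 f2 : bvec n -> bool) u :
  [disjoint S1 & S2] ->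
  Wpres S1 S2 f1 f2 u = 2 ^+ n./2 * (2 * sgn_on S1 f1 u + sgn_on S2 f2 u).
Proof.
move=> dis; rewrite /Wpres /sgn_on; case: ifPn => [u1|_].
  by rewrite (disjointFr dis u1) exprS; ring.
by case: ifP; rewrite ?mulr0 ?add0r // mulrC.
Qed.

Lemma hadamard_Wpres (S1 S2 : {set bvec n}) (f1 f2 : bvec n -> bool) y :
  [disjoint S1 & S2] ->
  hadamard (Wpres S1 S2 f1 f2) y = 2 ^+ n./2 * (2 * Xsum S1 f1 y + Xsum S2 f2 y).
Proof.
move=> dis; rewrite (@eq_hadamard _ _ y (fun x => WpresE S1 S2 f1 f2 x dis)).
by rewrite hadamardZ hadamardD hadamardZ !hadamard_sgn_on.
Qed.

End Hadamard.

Theorem mainTheorem2 (n : nat) (S1 S2 : {set bvec n}) (f1 f2 : bvec n -> bool) :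
  ~~ odd n ->
  [disjoint S1 & S2] ->
  (#|S1| + #|S2| < 2 ^ n)%N ->
  (exists f : bvec n -> bool, forall u, walsh f u = Wpres S1 S2 f1 f2 u) <->
  (forall u : bvec n, exists eps : bool,
      2 * Xsum S1 f1 u + Xsum S2 f2 u = sgnb eps * 2 ^+ n./2).
Proof.
move=> n_even dis _.
have n_half : (2 : int) ^+ n = 2 ^+ n./2 * 2 ^+ n./2.
  by rewrite -exprD addnn -{1}(odd_double_half n) (negbTE n_even).
have half_neq0 : (2 : int) ^+ n./2 != 0 by rewrite expf_neq0.
rewrite walsh_spectrumP; split=> H u; have [e He] := H u; exists e.
  by apply: (mulfI half_neq0); rewrite -hadamard_Wpres // He n_half mulrCA.
by rewrite hadamard_Wpres // He n_half mulrCA.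
Qed.
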